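(* Let $d>1$, let $n$ be a square-free positive integer and $r\mid n$. Let $\boldsymbol\tau=(\tau_1,\tau_2)\in\mathbb H^2$ and let $T_{\boldsymbol\tau}=\mathbb C^2/\Lambda_{\mathfrak b_r,\boldsymbol\tau}$ be the associated $(1,n)$-polarised abelian surface with real multiplication by $\mathcal O_{d^2}$. Let $E_1=\mathbb C\times\{0\}/(\Lambda_{\mathfrak b_r,\boldsymbol\tau}\cap(\mathbb C\times\{0\}))$ and $E_2=\{0\}\times\mathbb C/(\Lambda_{\mathfrak b_r,\boldsymbol\tau}\cap(\{0\}\times\mathbb C))$ be the elliptic curves in $T_{\boldsymbol\tau}$ generated by the eigenforms $du_1,du_2$. Then the restriction of the $(1,n)$-polarisation $\mathcal L$ of $T_{\boldsymbol\tau}$ satisfies $$\mathcal L|_{E_1}=\operatorname{lcm}(d,r)\cdot\mathcal O_{E_1}(0),\qquad \mathcal L|_{E_2}=\operatorname{lcm}(d,\tfrac nr)\cdot\mathcal O_{E_2}(0).$$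
   Context: $\mathcal O_{d^2}=\{(a_1,a_2)\in\mathbb Z^2:a_1\equiv a_2\bmod d\}\subset\mathbb Q\oplus\mathbb Q$ with componentwise multiplication; trace $\operatorname{tr}(a)=a_1+a_2$; $\mathcal O_{d^2}^\vee=\{x\in\mathbb Q^2:\operatorname{tr}(x\mathcal O_{d^2})\subset\mathbb Z\}=\langle\frac1d(1,-1),(0,1)\rangle_{\mathbb Z}$. For square-free $n$ and $r\mid n$, $\mathfrak b_r=\{(a_1,a_2)\in\mathbb Z^2:a_1\equiv a_2\bmod d,\ a_1\equiv0\bmod r,\ a_2\equiv0\bmod n/r\}$. On $\mathfrak b_r\oplus\mathcal O_{d^2}^\vee$ the trace pairing $\langle(a,b),(x,y)\rangle=\operatorname{tr}(ay-bx)=a_1y_1+a_2y_2-b_1x_1-b_2x_2$ is symplectic of type $(1,n)$. For $\boldsymbol\tau\in\mathbb H^2$, $\Lambda_{\mathfrak b_r,\boldsymbol\tau}=\{(a_1+b_1\tau_1,a_2+b_2\tau_2)^T: a\in\mathfrak b_r,b\in\mathcal O_{d^2}^\vee\}\subset\mathbb C^2$; $T_{\boldsymbol\tau}=\mathbb C^2/\Lambda_{\mathfrak b_r,\boldsymbol\tau}$ carries the polarisation $\mathcal L$ given by the trace pairing (transported to the lattice) and real multiplication by $\mathcal O_{d^2}$ acting componentwise; $du_1,du_2$ are the coordinate forms. ''$\mathcal L|_{E}=k\,\mathcal O_E(0)$'' means the restricted symplectic form on the rank-2 lattice of $E$ is $k$ times a unimodular one. *)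

From Stdlib Require Import Reals ZArith Znumtheory.
Open Scope R_scope.

(* C = R x R  (real part, imaginary part) *)
Definition Cpt := (R * R)%type.
Definition Czero : Cpt := (0, 0).
Definition Cofr (x : R) : Cpt := (x, 0).
Definition Cadd (z w : Cpt) : Cpt := (fst z + fst w, snd z + snd w).
Definition Cmul (z w : Cpt) : Cpt :=
  (fst z * fst w - snd z * snd w, fst z * snd w + snd z * fst w).
Definition Cscal (m : Z) (z : Cpt) : Cpt := (IZR m * fst z, IZR m * snd z).

Definition in_H (t : Cpt) : Prop := 0 < snd t.

Definition is_int (x : R) : Prop := exists z : Z, x = IZR z.

Definition squarefree (n : Z) : Prop :=
  forall k : Z, (1 < k)%Z -> ~ (k * k | n)%Z.

Definition in_O (d a1 a2 : Z) : Prop := (d | a1 - a2)%Z.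

Definition in_b (d n r a1 a2 : Z) : Prop :=
  in_O d a1 a2 /\ (r | a1)%Z /\ (Z.div n r | a2)%Z.

(* trace dual O_{d^2}^vee = {x : tr(x O) subset Z}  (x taken in R^2; it is
   automatically rational) *)
Definition in_Odual (d : Z) (x1 x2 : R) : Prop :=
  forall a1 a2 : Z, in_O d a1 a2 -> is_int (x1 * IZR a1 + x2 * IZR a2).

(* a parameter (a1,a2,b1,b2) of a point of b_r (+) O^vee *)
Definition param := (Z * Z * R * R)%type.
Definition pa1 (p : param) : Z := fst (fst (fst p)).
Definition pa2 (p : param) : Z := snd (fst (fst p)).
Definition pb1 (p : param) : R := snd (fst p).
Definition pb2 (p : param) : R := snd p.

Definition valid_param (d n r : Z) (p : param) : Prop :=
  in_b d n r (pa1 p) (pa2 p) /\ in_Odual d (pb1 p) (pb2 p).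

(* the map (a,b) |-> (a1 + b1 tau1, a2 + b2 tau2) onto Lambda_{b_r,tau} *)
Definition embed (t1 t2 : Cpt) (p : param) : Cpt * Cpt :=
  (Cadd (Cofr (IZR (pa1 p))) (Cmul (Cofr (pb1 p)) t1),
   Cadd (Cofr (IZR (pa2 p))) (Cmul (Cofr (pb2 p)) t2)).

Definition pairing (p q : param) : R :=
  IZR (pa1 p) * pb1 q + IZR (pa2 p) * pb2 q
  - pb1 p * IZR (pa1 q) - pb2 p * IZR (pa2 q).

Definition inj1 (w : Cpt) : Cpt * Cpt := (w, Czero).
Definition inj2 (w : Cpt) : Cpt * Cpt := (Czero, w).

Definition E_lattice (d n r : Z) (t1 t2 : Cpt) (inj : Cpt -> Cpt * Cpt)
  (w : Cpt) : Prop :=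
  exists p, valid_param d n r p /\ embed t1 t2 p = inj w.

Definition lattice_basis (L : Cpt -> Prop) (e f : Cpt) : Prop :=
  L e /\ L f /\
  (forall w, L w -> exists m k : Z, w = Cadd (Cscal m e) (Cscal k f)) /\
  (forall m k : Z, Cadd (Cscal m e) (Cscal k f) = Czero -> m = 0%Z /\ k = 0%Z).

(* L|_E = k O_E(0): the restriction of the (transported) trace pairing to
   the lattice of E is k times a unimodular form, i.e. its value on some
   Z-basis of the lattice equals k *)
Definition restr_is_k (d n r : Z) (t1 t2 : Cpt) (inj : Cpt -> Cpt * Cpt)
  (k : Z) : Prop :=
  exists (e f : Cpt) (pe pf : param),
    lattice_basis (E_lattice d n r t1 t2 inj) e f /\
    valid_param d n r pe /\ valid_param d n r pf /\
    embed t1 t2 pe = inj e /\ embed t1 t2 pf = inj f /\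
    pairing pe pf = IZR k.

From Stdlib Require Import Reals ZArith Znumtheory Lra Lia.
Open Scope R_scope.

(* A point (a1 + b1 tau1, a2 + b2 tau2) of the lattice lies on the
   first axis C x {0} iff a2 + b2 tau2 = 0, i.e. (Im tau2 > 0) iff a2 = b2 = 0.
   Then a1 is divisible by d (a = (a1, 0) lies in O_{d^2}) and by r, hence by
   lcm(d, r), while b1 = tr((b1, 0) * 1) is an integer.  Conversely (lcm(d,r), 0)
   lies in b_r and (1, 0) in the dual, so the lattice of E_1 has the basis
   lcm(d, r), tau1, on which the trace pairing takes the value lcm(d, r).
   The second axis is then reduced to the first one by the symmetry exchanging
   the two coordinates: it maps b_r onto b_{n/r}, O^vee onto itself, swaps tau1
   and tau2, and preserves the trace pairing. *)

Lemma real_combination_eq0 (a b : R) (t : Cpt) :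
  in_H t -> Cadd (Cofr a) (Cmul (Cofr b) t) = Czero -> a = 0 /\ b = 0.
Proof.
  destruct t as [x y]; unfold in_H, Cadd, Cofr, Cmul, Czero; simpl.
  intros hy H; injection H as Hre Him.
  assert (hb : b = 0).
  { assert (hby : b * y = 0) by lra.
    apply Rmult_integral in hby as [hb | hy0]; lra. }
  subst b; split; lra.
Qed.

Lemma Cscal_combination (m k : Z) (x : R) (t : Cpt) :
  Cadd (Cscal m (Cofr x)) (Cscal k t) = Cadd (Cofr (IZR m * x)) (Cmul (Cofr (IZR k)) t).
Proof.
  destruct t as [t1 t2]; unfold Cadd, Cscal, Cofr, Cmul; simpl; f_equal; ring.
Qed.

(* Pairing x in O^vee with 1 = (1, 1) in O shows tr(x) = x1 + x2 is an integer. *)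
Lemma Odual_trace_int (d : Z) (x1 x2 : R) :
  in_Odual d x1 x2 -> is_int (x1 + x2).
Proof.
  intros Hdual.
  destruct (Hdual 1%Z 1%Z) as [z Hz]; [exists 0%Z; lia |].
  exists z; rewrite <- Hz; simpl; ring.
Qed.

Lemma in_b_first_axis (d n r a1 : Z) :
  in_b d n r a1 0 -> (Z.lcm d r | a1)%Z.
Proof.
  intros [HO [Hr _]]; unfold in_O in HO; rewrite Z.sub_0_r in HO.
  now apply Z.lcm_least.
Qed.

Lemma first_axis_span (d n r : Z) (t1 t2 w : Cpt) :
  in_H t2 -> E_lattice d n r t1 t2 inj1 w ->
  exists m k : Z, w = Cadd (Cscal m (Cofr (IZR (Z.lcm d r)))) (Cscal k t1).
Proof.
  intros ht2 [p [[Hb Hdual] He]].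
  assert (Hw : Cadd (Cofr (IZR (pa1 p))) (Cmul (Cofr (pb1 p)) t1) = w)
    by exact (f_equal fst He).
  assert (Hoff : Cadd (Cofr (IZR (pa2 p))) (Cmul (Cofr (pb2 p)) t2) = Czero)
    by exact (f_equal snd He).
  destruct (real_combination_eq0 _ _ _ ht2 Hoff) as [Ha2 Hb2].
  apply eq_IZR in Ha2; rewrite Ha2 in Hb.
  destruct (in_b_first_axis _ _ _ _ Hb) as [m Hm].
  destruct (Odual_trace_int _ _ _ Hdual) as [k Hk].
  exists m, k.
  rewrite Cscal_combination, <- Hw, Hm, mult_IZR.
  replace (pb1 p) with (IZR k) by lra; reflexivity.
Qed.

Lemma restr_first_axis (d n r : Z) (t1 t2 : Cpt) :
  d <> 0%Z -> r <> 0%Z -> in_H t1 -> in_H t2 ->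
  restr_is_k d n r t1 t2 inj1 (Z.lcm d r).
Proof.
  intros hd hr ht1 ht2.
  set (L := Z.lcm d r).
  assert (HL : L <> 0%Z) by (intro H; apply Z.lcm_eq_0 in H; lia).
  set (pe := (L, 0%Z, 0, 0) : param).
  set (pf := (0%Z, 0%Z, 1, 0) : param).
  assert (vpe : valid_param d n r pe).
  { split; [split; [| split] |]; cbn.
    - unfold in_O; rewrite Z.sub_0_r; apply Z.divide_lcm_l.
    - apply Z.divide_lcm_r.
    - apply Z.divide_0_r.
    - intros a1 a2 _; exists 0%Z; ring. }
  assert (vpf : valid_param d n r pf).
  { split; [split; [| split] |]; cbn; try apply Z.divide_0_r.
    intros a1 a2 _; exists a1; ring. }
  assert (epe : embed t1 t2 pe = inj1 (Cofr (IZR L))).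
  { destruct t1, t2; unfold embed, inj1, Cadd, Cofr, Cmul, Czero; cbn.
    f_equal; f_equal; ring. }
  assert (epf : embed t1 t2 pf = inj1 t1).
  { destruct t1, t2; unfold embed, inj1, Cadd, Cofr, Cmul, Czero; cbn.
    f_equal; f_equal; ring. }
  exists (Cofr (IZR L)), t1, pe, pf.
  refine (conj _ (conj vpe (conj vpf (conj epe (conj epf _))))).
  - split; [exists pe; auto |].
    split; [exists pf; auto |].
    split.
    + intros w Hw; exact (first_axis_span d n r t1 t2 w ht2 Hw).
    + intros m k H; rewrite Cscal_combination in H.
      destruct (real_combination_eq0 _ _ _ ht1 H) as [HmL Hk].
      apply eq_IZR in Hk; split; [| exact Hk].
      rewrite <- mult_IZR in HmL; apply eq_IZR, Z.mul_eq_0 in HmL; lia.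
  - unfold pairing; cbn; ring.
Qed.

Definition swap_param (p : param) : param := (pa2 p, pa1 p, pb2 p, pb1 p).
Definition swap_pt (z : Cpt * Cpt) : Cpt * Cpt := (snd z, fst z).

Lemma in_O_swap (d a1 a2 : Z) : in_O d a1 a2 -> in_O d a2 a1.
Proof.
  unfold in_O; intros H; replace (a2 - a1)%Z with (- (a1 - a2))%Z by ring.
  now apply Z.divide_opp_r.
Qed.

Lemma in_Odual_swap (d : Z) (x1 x2 : R) :
  in_Odual d x1 x2 -> in_Odual d x2 x1.
Proof.
  intros Hdual a1 a2 Ha.
  destruct (Hdual a2 a1 (in_O_swap _ _ _ Ha)) as [z Hz].
  exists z; rewrite <- Hz; ring.
Qed.

Section Swap.

Variables (d n r s : Z).
Hypotheses (hrs : (r * s = n)%Z) (hr : r <> 0%Z) (hs : s <> 0%Z).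

Lemma in_b_swap (a1 a2 : Z) : in_b d n r a1 a2 -> in_b d n s a2 a1.
Proof.
  assert (hnr : Z.div n r = s) by (subst n; rewrite Z.mul_comm; apply Z.div_mul; lia).
  assert (hns : Z.div n s = r) by (subst n; apply Z.div_mul; lia).
  unfold in_b; rewrite hnr, hns; intros [HO [Hr Hs]].
  split; [now apply in_O_swap | tauto].
Qed.

Lemma valid_param_swap (p : param) :
  valid_param d n r p -> valid_param d n s (swap_param p).
Proof.
  intros [Hb Hdual]; split; [now apply in_b_swap | now apply in_Odual_swap].
Qed.

End Swap.

Lemma embed_swap (t1 t2 : Cpt) (p : param) :
  embed t1 t2 (swap_param p) = swap_pt (embed t2 t1 p).
Proof. reflexivity. Qed.

Lemma pairing_swap (p q : param) :
  pairing (swap_param p) (swap_param q) = pairing p q.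
Proof. unfold pairing, swap_param; cbn; ring. Qed.

Lemma E_lattice_swap (d n r s : Z) (t1 t2 w : Cpt) :
  (r * s = n)%Z -> r <> 0%Z -> s <> 0%Z ->
  E_lattice d n r t1 t2 inj2 w <-> E_lattice d n s t2 t1 inj1 w.
Proof.
  intros hrs hr hs; split; intros [p [Hp He]]; exists (swap_param p); split.
  - exact (valid_param_swap d n r s hrs hr hs p Hp).
  - now rewrite embed_swap, He.
  - apply (valid_param_swap d n s r); auto; lia.
  - now rewrite embed_swap, He.
Qed.

Lemma lattice_basis_ext (L L' : Cpt -> Prop) (e f : Cpt) :
  (forall w, L w <-> L' w) -> lattice_basis L e f -> lattice_basis L' e f.
Proof.
  intros HLL' [He [Hf [Hspan Hfree]]].
  split; [now apply HLL' |].
  split; [now apply HLL' |].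
  split; [| exact Hfree].
  intros w Hw; apply Hspan, HLL', Hw.
Qed.

Lemma restr_swap (d n r s : Z) (t1 t2 : Cpt) (k : Z) :
  (r * s = n)%Z -> r <> 0%Z -> s <> 0%Z ->
  restr_is_k d n s t2 t1 inj1 k -> restr_is_k d n r t1 t2 inj2 k.
Proof.
  intros hrs hr hs [e [f [pe [pf [Hbasis [Hpe [Hpf [He [Hf Hk]]]]]]]]].
  assert (hsr : (s * r = n)%Z) by lia.
  exists e, f, (swap_param pe), (swap_param pf).
  split; [| split; [| split; [| split; [| split]]]].
  - apply (lattice_basis_ext (E_lattice d n s t2 t1 inj1)); auto.
    intro w; symmetry; now apply E_lattice_swap.
  - exact (valid_param_swap d n s r hsr hs hr pe Hpe).
  - exact (valid_param_swap d n s r hsr hs hr pf Hpf).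
  - now rewrite embed_swap, He.
  - now rewrite embed_swap, Hf.
  - now rewrite pairing_swap.
Qed.

Theorem theorem3p1 (d n r : Z) (t1 t2 : Cpt)
  (hd : (1 < d)%Z) (hn : (0 < n)%Z) (hsf : squarefree n)
  (hr : (0 < r)%Z) (hrn : (r | n)%Z)
  (ht1 : in_H t1) (ht2 : in_H t2) :
  restr_is_k d n r t1 t2 inj1 (Z.lcm d r) /\
  restr_is_k d n r t1 t2 inj2 (Z.lcm d (Z.div n r)).
Proof.
  split.
  - apply restr_first_axis; auto; lia.
  - destruct hrn as [s Hs].
    assert (hs : s <> 0%Z) by (intro; subst; lia).
    assert (hnr : Z.div n r = s) by (subst n; apply Z.div_mul; lia).
    rewrite hnr.
    apply (restr_swap d n r s); auto; try lia.
    apply restr_first_axis; auto; lia.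
Qed.
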